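(* Assume $h_1=0$. Let $\nu$ range over Borel probability measures on $D$. Then $$\min_{\nu}\frac{\big(\int_D h_0\mu\,\nu(d\mu\,d\sigma)\big)^2}{\int_D(\mu^2+\sigma^2)\,\nu(d\mu\,d\sigma)}=\begin{cases}\dfrac{h_0^2\mu_-^2}{\mu_-^2+\sigma_+^2},&\text{if } \mu_+\mu_--2\sigma_+^2\le\mu_-^2,\\[2mm] \dfrac{\mu_+\mu_--\sigma_+^2}{\mu_M^2}\,h_0^2,&\text{if } \mu_-^2<\mu_+\mu_--2\sigma_+^2.\end{cases}$$ The unique minimizer $\pi^*$ of $\pi\mapsto\max_{(\mu,\sigma)\in D}F(\pi,\mu,\sigma)$ is $$\pi^*=\begin{cases}\dfrac{h_0\mu_-}{\mu_-^2+\sigma_+^2},&\text{if } \mu_+\mu_--2\sigma_+^2\le\mu_-^2,\\[2mm] \dfrac{h_0}{\mu_M},&\text{if } \mu_-^2<\mu_+\mu_--2\sigma_+^2.\end{cases}$$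
   Context: Let $0<\mu_-<\mu_+$ and $0<\sigma_-<\sigma_+$ be real numbers, $D=[\mu_-,\mu_+]\times[\sigma_-,\sigma_+]$, and $h_0,h_1\in\mathbb R$. For $\pi\in\mathbb R$ and $(\mu,\sigma)\in D$ put $F(\pi,\mu,\sigma)=(h_0-\pi\mu)^2+(h_1-\pi\sigma)^2$. Write $\mu_M=(\mu_++\mu_-)/2$. *)

From Stdlib Require Import Reals Lra.
Open Scope R_scope.

Definition pt := (R * R)%type.
Definition pset := pt -> Prop.

Definition Dset (mum mup sm sp : R) : pset :=
  fun p => mum <= fst p <= mup /\ sm <= snd p <= sp.

Definition F (h0 h1 pi mu sigma : R) : R :=
  (h0 - pi * mu) ^ 2 + (h1 - pi * sigma) ^ 2.

Definition is_open2 (U : pset) : Prop :=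
  forall x, U x -> exists eps, 0 < eps /\
    forall y, (fst y - fst x) ^ 2 + (snd y - snd x) ^ 2 < eps ^ 2 -> U y.

Definition sigma_algebra (S : pset -> Prop) : Prop :=
  S (fun _ => True) /\
  (forall A, S A -> S (fun x => ~ A x)) /\
  (forall A : nat -> pset, (forall n, S (A n)) -> S (fun x => exists n, A n x)).

Definition Borel (A : pset) : Prop :=
  forall S, sigma_algebra S -> (forall U, is_open2 U -> S U) -> S A.

Definition disjoint_family (A : nat -> pset) : Prop :=
  forall m n x, m <> n -> A m x -> A n x -> False.

(* nu is a Borel probability measure on the set D (a Borel measure on R^2
   giving full mass to D); its values on non-Borel sets are irrelevant. *)
Definition borel_prob_on (D : pset) (nu : pset -> R) : Prop :=
  (forall A, Borel A -> 0 <= nu A) /\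
  nu D = 1 /\
  (forall A : nat -> pset, (forall n, Borel (A n)) -> disjoint_family A ->
     infinite_sum (fun n => nu (A n)) (nu (fun x => exists n, A n x))).

Fixpoint rsum (n : nat) (g : nat -> R) : R :=
  match n with
  | O => 0
  | S k => rsum k g + g k
  end.

Definition simple_below (D : pset) (nu : pset -> R) (f : pt -> R) (v : R) : Prop :=
  exists (n : nat) (A : nat -> pset) (c : nat -> R),
    (forall i, (i < n)%nat ->
       Borel (A i) /\ 0 <= c i /\ forall x, A i x -> D x /\ c i <= f x) /\
    (forall i j x, (i < n)%nat -> (j < n)%nat -> i <> j -> A i x -> A j x -> False) /\
    v = rsum n (fun i => c i * nu (A i)).

(* I is the (Lebesgue) integral over D of f with respect to nu:
   integral of f^+ minus integral of f^-, each defined as the supremum of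
   integrals of nonnegative simple functions below it. *)
Definition is_integral (D : pset) (nu : pset -> R) (f : pt -> R) (I : R) : Prop :=
  exists Ip In,
    is_lub (simple_below D nu (fun x => Rmax (f x) 0)) Ip /\
    is_lub (simple_below D nu (fun x => Rmax (- f x) 0)) In /\
    I = Ip - In.

Definition is_max_F (D : pset) (h0 h1 pi m : R) : Prop :=
  (exists p, D p /\ F h0 h1 pi (fst p) (snd p) = m) /\
  (forall p, D p -> F h0 h1 pi (fst p) (snd p) <= m).

(* The lower bound rests on the chord inequality on the rectangle D:
   writing a = mu_+ + mu_- and b = mu_+ mu_- - sigma_+^2, every point
   (mu, sigma) of D satisfies mu^2 + sigma^2 <= a mu - b, with equality at
   the two corners (mu_-, sigma_+) and (mu_+, sigma_+).  Integrating against a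
   probability measure nu on D gives, with m = int mu dnu >= mu_-,
   I2 <= a m - b, so I1^2 / I2 >= h0^2 m^2 / (a m - b), and the right-hand
   side is minimised over m >= mu_- at m = mu_- or at m = 2b/a.  Both values
   are attained by measures carried by the two corners. *)

From Stdlib Require Import Reals Lra Lia Psatz Classical ClassicalEpsilon
  FunctionalExtensionality PropExtensionality.
Open Scope R_scope.

Lemma div_le_of_le_mul (u v w : R) : 0 < w -> u <= v * w -> u / w <= v.
Proof.
  intros Hw H. apply Rmult_le_reg_r with w; [auto|].
  unfold Rdiv. rewrite Rmult_assoc, Rinv_l, Rmult_1_r by lra. auto.
Qed.

Lemma le_div_of_mul_le (u v w : R) : 0 < w -> u * w <= v -> u <= v / w.
Proof.
  intros Hw H. apply Rmult_le_reg_r with w; [auto|].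
  unfold Rdiv. rewrite Rmult_assoc, Rinv_l, Rmult_1_r by lra. auto.
Qed.

Lemma square_convex_le (u1 u2 t : R) :
  0 <= t <= 1 -> u2 ^ 2 <= u1 ^ 2 -> (t * u1 + (1 - t) * u2) ^ 2 <= u1 ^ 2.
Proof.
  intros Ht H.
  assert (E : t * u1 ^ 2 + (1 - t) * u2 ^ 2 - (t * u1 + (1 - t) * u2) ^ 2
              = t * (1 - t) * (u1 - u2) ^ 2) by ring.
  assert (0 <= t * (1 - t) * (u1 - u2) ^ 2) by (apply Rmult_le_pos; [nra | apply pow2_ge_0]).
  nra.
Qed.

Lemma Rmax_split (y : R) : Rmax y 0 - Rmax (- y) 0 = y.
Proof. unfold Rmax. destruct (Rle_dec y 0); destruct (Rle_dec (- y) 0); lra. Qed.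

Lemma pset_ext (A B : pset) : (forall x, A x <-> B x) -> A = B.
Proof.
  intros H. apply functional_extensionality; intro x.
  apply propositional_extensionality; auto.
Qed.

Lemma Borel_compl (A : pset) : Borel A -> Borel (fun x => ~ A x).
Proof. intros HA S HS HO. apply (proj1 (proj2 HS)), HA; auto. Qed.

Lemma Borel_union (A : nat -> pset) :
  (forall n, Borel (A n)) -> Borel (fun x => exists n, A n x).
Proof. intros HA S HS HO. apply (proj2 (proj2 HS)). intro n; apply HA; auto. Qed.

Lemma Borel_empty : Borel (fun _ => False).
Proof.
  replace (fun _ : pt => False) with (fun _ : pt => ~ True)
    by (apply pset_ext; tauto).
  apply Borel_compl. intros S HS _. apply HS.
Qed.

Lemma Borel_inter (A B : pset) : Borel A -> Borel B -> Borel (fun x => A x /\ B x).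
Proof.
  intros HA HB.
  set (C := fun n : nat => match n with O => fun x => ~ A x | _ => fun x => ~ B x end).
  replace (fun x => A x /\ B x) with (fun x => ~ exists n, C n x).
  - apply Borel_compl, Borel_union. intros [|n]; apply Borel_compl; auto.
  - apply pset_ext; intro x; split.
    + intro H. split; apply NNPP; intro H'; apply H; [exists O | exists 1%nat]; auto.
    + intros [H1 H2] [[|n] Hn]; auto.
Qed.

Lemma Borel_fin_union (n : nat) (A : nat -> pset) :
  (forall i, (i < n)%nat -> Borel (A i)) ->
  Borel (fun x => exists i, (i < n)%nat /\ A i x).
Proof.
  intros HA. apply (Borel_union (fun k x => (k < n)%nat /\ A k x)). intro k.
  destruct (Compare_dec.lt_dec k n) as [Hk|Hk].
  - replace (fun x => (k < n)%nat /\ A k x) with (A k) by (apply pset_ext; tauto).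
    auto.
  - replace (fun x => (k < n)%nat /\ A k x) with (fun _ : pt => False)
      by (apply pset_ext; tauto).
    apply Borel_empty.
Qed.

Lemma Borel_closed (A : pset) : is_open2 (fun x => ~ A x) -> Borel A.
Proof.
  intro H. replace A with (fun x => ~ ~ A x)
    by (apply pset_ext; intro x; split; [apply NNPP | tauto]).
  apply Borel_compl. intros S _ HO. auto.
Qed.

Lemma coord_close (x y : pt) (eps : R) : 0 < eps ->
  (fst y - fst x) ^ 2 + (snd y - snd x) ^ 2 < eps ^ 2 ->
  Rabs (fst y - fst x) < eps /\ Rabs (snd y - snd x) < eps.
Proof.
  intros He H. set (u := fst y - fst x) in *. set (v := snd y - snd x) in *.
  split; apply Rabs_def1; nra.
Qed.

Lemma Borel_rect (u1 u2 v1 v2 : R) : Borel (Dset u1 u2 v1 v2).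
Proof.
  apply Borel_closed. intros x Hx. unfold Dset in Hx.
  destruct (Rlt_dec (fst x) u1) as [H|H].
  { exists (u1 - fst x); split; [lra|]. intros y Hy [[? ?] ?].
    destruct (coord_close x y (u1 - fst x) ltac:(lra) Hy) as [Hc _]. apply Rabs_def2 in Hc. lra. }
  destruct (Rlt_dec u2 (fst x)) as [H'|H'].
  { exists (fst x - u2); split; [lra|]. intros y Hy [[? ?] ?].
    destruct (coord_close x y (fst x - u2) ltac:(lra) Hy) as [Hc _]. apply Rabs_def2 in Hc. lra. }
  destruct (Rlt_dec (snd x) v1) as [K|K].
  { exists (v1 - snd x); split; [lra|]. intros y Hy [? [? ?]].
    destruct (coord_close x y (v1 - snd x) ltac:(lra) Hy) as [_ Hc]. apply Rabs_def2 in Hc. lra. }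
  destruct (Rlt_dec v2 (snd x)) as [K'|K'].
  { exists (snd x - v2); split; [lra|]. intros y Hy [? [? ?]].
    destruct (coord_close x y (snd x - v2) ltac:(lra) Hy) as [_ Hc]. apply Rabs_def2 in Hc. lra. }
  exfalso; apply Hx; lra.
Qed.

(* Singletons are degenerate rectangles. *)
Lemma Borel_point (p : pt) : Borel (fun x => x = p).
Proof.
  replace (fun x => x = p) with (Dset (fst p) (fst p) (snd p) (snd p));
    [apply Borel_rect|].
  apply pset_ext; intros [u v]; destruct p as [u' v']; unfold Dset; simpl; split.
  - intros [[? ?] [? ?]]; f_equal; lra.
  - intro E; injection E; intros; subst; lra.
Qed.

Lemma rsum_ext (n : nat) (f g : nat -> R) :
  (forall i, (i < n)%nat -> f i = g i) -> rsum n f = rsum n g.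
Proof.
  induction n as [|n IH]; simpl; intros H; [reflexivity|].
  rewrite IH by (intros; apply H; lia). rewrite H by lia. reflexivity.
Qed.

Lemma rsum_le (n : nat) (f g : nat -> R) :
  (forall i, (i < n)%nat -> f i <= g i) -> rsum n f <= rsum n g.
Proof.
  induction n as [|n IH]; simpl; intros H; [lra|].
  pose proof (H n ltac:(lia)). pose proof (IH ltac:(intros; apply H; lia)). lra.
Qed.

Lemma rsum_plus (n : nat) (f g : nat -> R) :
  rsum n (fun i => f i + g i) = rsum n f + rsum n g.
Proof. induction n as [|n IH]; simpl; [lra|]. rewrite IH; ring. Qed.

Lemma rsum_scal (n : nat) (k : R) (f : nat -> R) :
  rsum n (fun i => k * f i) = k * rsum n f.
Proof. induction n as [|n IH]; simpl; [lra|]. rewrite IH; ring. Qed.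

Lemma rsum_zero (n : nat) : rsum n (fun _ => 0) = 0.
Proof. induction n as [|n IH]; simpl; [reflexivity|]. rewrite IH; ring. Qed.

Lemma rsum_tail (N m : nat) (f : nat -> R) :
  (forall k, (k >= N)%nat -> f k = 0) -> (m >= N)%nat -> rsum m f = rsum N f.
Proof.
  intros Hf Hm. induction Hm as [|m Hm IH]; [reflexivity|].
  simpl. rewrite IH, (Hf m) by lia. ring.
Qed.

(* The partial sums of Stdlib series are rsum's with one more term. *)
Lemma sum_f_rsum (s : nat -> R) (n : nat) : sum_f_R0 s n = rsum (S n) s.
Proof. induction n as [|n IH]; simpl; [lra|]. rewrite IH; simpl; ring. Qed.

Lemma sum_f_R0_single (f : nat -> R) (k0 n : nat) :
  (forall k, k <> k0 -> f k = 0) -> (k0 <= n)%nat -> sum_f_R0 f n = f k0.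
Proof.
  intros Hz Hn. induction Hn as [|n Hn IH].
  - destruct k0 as [|k]; simpl; [reflexivity|].
    rewrite sum_eq_R0; [ring|]. intros i Hi; apply Hz; lia.
  - simpl. rewrite IH, (Hz (S n)) by lia. ring.
Qed.

Lemma infinite_sum_eventually (s : nat -> R) (l : R) (N : nat) :
  (forall n, (n >= N)%nat -> sum_f_R0 s n = l) -> infinite_sum s l.
Proof.
  intros HN eps He. exists N. intros n Hn. rewrite HN by auto.
  unfold Rdist. rewrite Rminus_diag, Rabs_R0. lra.
Qed.

Lemma series_const_zero (c l : R) : infinite_sum (fun _ => c) l -> c = 0.
Proof.
  intros Hs. apply NNPP; intro Hc.
  destruct (Hs (Rabs c / 2)) as [N HN]; [apply Rabs_pos_lt in Hc; lra|].
  pose proof (HN N ltac:(lia)) as H1. pose proof (HN (S N) ltac:(lia)) as H2.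
  simpl in H2; unfold Rdist in H1, H2.
  apply Rabs_def2 in H1; apply Rabs_def2 in H2.
  destruct (Rle_or_lt 0 c); [rewrite Rabs_right in * by lra | rewrite Rabs_left in * by lra];
    lra.
Qed.

(** Probability measures: null sets and finite additivity *)

(* The empty set is null: apply countable additivity to the constant empty family. *)
Lemma nu_empty (D : pset) (nu : pset -> R) : borel_prob_on D nu -> nu (fun _ => False) = 0.
Proof.
  intros [_ [_ Hadd]].
  assert (Hs := Hadd (fun _ _ => False) (fun _ => Borel_empty) (fun _ _ _ _ H _ => H)).
  cbv beta in Hs.
  replace (fun _ : pt => exists _ : nat, False) with (fun _ : pt => False) in Hs
    by (apply pset_ext; firstorder).
  exact (series_const_zero _ _ Hs).
Qed.

Lemma nu_null_or_nonempty (D : pset) (nu : pset -> R) (A : pset) :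
  borel_prob_on D nu -> (exists x, A x) \/ nu A = 0.
Proof.
  intros Hnu. destruct (classic (exists x, A x)) as [H|H]; [left; auto|right].
  replace A with (fun _ : pt => False) by (apply pset_ext; firstorder).
  eapply nu_empty; eauto.
Qed.

Lemma nu_finite_additive (D : pset) (nu : pset -> R) (B : nat -> pset) (N : nat) :
  borel_prob_on D nu -> (forall k, Borel (B k)) -> disjoint_family B ->
  (forall k x, (k >= N)%nat -> ~ B k x) ->
  nu (fun x => exists k, B k x) = rsum N (fun k => nu (B k)).
Proof.
  intros Hnu HB Hd Htail.
  assert (Hnull : forall k, (k >= N)%nat -> nu (B k) = 0).
  { intros k Hk. replace (B k) with (fun _ : pt => False)
      by (apply pset_ext; intro x; specialize (Htail k x Hk); tauto).
    eapply nu_empty; eauto. }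
  apply (uniqueness_sum (fun k => nu (B k))); [apply Hnu; auto|].
  apply (infinite_sum_eventually _ _ N). intros n Hn.
  rewrite sum_f_rsum. apply rsum_tail; [auto | lia].
Qed.

Definition remainder (D : pset) (n : nat) (A : nat -> pset) : pset :=
  fun x => D x /\ ~ (exists i, (i < n)%nat /\ A i x).

Lemma Borel_remainder (D : pset) (n : nat) (A : nat -> pset) :
  Borel D -> (forall i, (i < n)%nat -> Borel (A i)) -> Borel (remainder D n A).
Proof. intros HD HA. apply Borel_inter; [auto|]. apply Borel_compl, Borel_fin_union; auto. Qed.

Lemma nu_partition (D : pset) (nu : pset -> R) (n : nat) (A : nat -> pset) :
  borel_prob_on D nu -> Borel D ->
  (forall i, (i < n)%nat -> Borel (A i) /\ forall x, A i x -> D x) ->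
  (forall i j x, (i < n)%nat -> (j < n)%nat -> i <> j -> A i x -> A j x -> False) ->
  rsum n (fun i => nu (A i)) + nu (remainder D n A) = 1.
Proof.
  intros Hnu HD HA Hdis.
  set (B := fun k x => ((k < n)%nat /\ A k x) \/ (k = n /\ remainder D n A x)).
  assert (EA : forall k, (k < n)%nat -> B k = A k).
  { intros k Hk; apply pset_ext; intro x; unfold B.
    split; [intros [[_ ?]|[? _]]; [auto|lia] | auto]. }
  assert (ER : B n = remainder D n A).
  { apply pset_ext; intro x; unfold B. split; [intros [[? _]|[_ ?]]; [lia|auto] | auto]. }
  assert (HB : forall k, Borel (B k)).
  { intro k. destruct (Nat.lt_trichotomy k n) as [Hk|[Hk|Hk]].
    - rewrite EA by auto. apply HA; auto.
    - subst k. rewrite ER. apply Borel_remainder; [auto|]. intros; apply HA; auto.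
    - replace (B k) with (fun _ : pt => False)
        by (apply pset_ext; intro x; unfold B; split; [tauto | intros [[? _]|[? _]]; lia]).
      apply Borel_empty. }
  assert (Hdisj : disjoint_family B).
  { intros i j x Hij [[Hi Ai]|[-> [_ Ni]]] [[Hj Aj]|[-> [_ Nj]]].
    - exact (Hdis i j x Hi Hj Hij Ai Aj).
    - apply Nj; eauto.
    - apply Ni; eauto.
    - lia. }
  assert (Hcover : (fun x => exists k, B k x) = D).
  { apply pset_ext; intro x; split.
    - intros [k [[Hk Ak]|[_ [Dx _]]]]; [apply (HA k Hk); auto | auto].
    - intro Dx. destruct (classic (exists i, (i < n)%nat /\ A i x)) as [[i [Hi Ai]]|Hno].
      + exists i; left; auto.
      + exists n; right; split; [auto | split; auto]. }
  assert (Hsum := nu_finite_additive D nu B (S n) Hnu HB Hdisj).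
  rewrite Hcover, (proj1 (proj2 Hnu)) in Hsum.
  rewrite Hsum by (intros k x Hk [[? _]|[? _]]; lia). simpl.
  rewrite ER. f_equal. apply rsum_ext; intros i Hi. rewrite EA; auto.
Qed.

(** Suprema of integrals of simple functions *)

Lemma simple_below_ext (D : pset) (nu : pset -> R) (f g : pt -> R) (v : R) :
  (forall x, D x -> f x = g x) -> simple_below D nu f v -> simple_below D nu g v.
Proof.
  intros Hfg [n [A [c [Hc [Hdis Hv]]]]]. exists n, A, c. split; [|split; auto].
  intros i Hi. destruct (Hc i Hi) as [HB [Hci HA]]. split; [auto | split; [auto|]].
  intros x Ax. destruct (HA x Ax) as [Dx Hle]. split; [auto|]. rewrite <- (Hfg x Dx); auto.
Qed.

Lemma is_lub_simple_below_ext (D : pset) (nu : pset -> R) (f g : pt -> R) (L : R) :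
  (forall x, D x -> f x = g x) ->
  is_lub (simple_below D nu f) L -> is_lub (simple_below D nu g) L.
Proof.
  intros Hfg [Hub Hleast]. split.
  - intros v Hv. apply Hub. apply (simple_below_ext D nu g f); auto.
    intros x Dx; symmetry; auto.
  - intros M HM. apply Hleast. intros v Hv. apply HM. eapply simple_below_ext; eauto.
Qed.

Lemma sup_simple_zero (D : pset) (nu : pset -> R) (L : R) : borel_prob_on D nu ->
  is_lub (simple_below D nu (fun _ => 0)) L -> L = 0.
Proof.
  intros Hnu [Hub Hleast]. apply Rle_antisym.
  - apply Hleast. intros v [n [A [c [Hc [_ ->]]]]].
    rewrite <- (rsum_zero n). apply rsum_le; intros i Hi.
    destruct (Hc i Hi) as [_ [Hci HA]].
    destruct (nu_null_or_nonempty D nu (A i) Hnu) as [[x Ax]|H0].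
    + destruct (HA x Ax) as [_ Hle]. replace (c i) with 0 by lra. lra.
    + rewrite H0; lra.
  - apply Hub. exists O, (fun _ _ => False), (fun _ => 0). repeat split; intros; lia.
Qed.

Lemma sup_simple_ge_const (D : pset) (nu : pset -> R) (f : pt -> R) (c L : R) :
  borel_prob_on D nu -> Borel D -> 0 <= c -> (forall x, D x -> c <= f x) ->
  is_lub (simple_below D nu f) L -> c <= L.
Proof.
  intros Hnu HD Hc Hf [Hub _]. apply Hub.
  exists 1%nat, (fun _ => D), (fun _ => c). split; [|split].
  - intros i Hi. split; auto.
  - intros i j x Hi Hj; lia.
  - simpl. rewrite (proj1 (proj2 Hnu)). ring.
Qed.

Lemma integral_nonneg_sup (D : pset) (nu : pset -> R) (f : pt -> R) (I : R) :
  borel_prob_on D nu -> (forall x, D x -> 0 <= f x) ->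
  is_integral D nu f I -> is_lub (simple_below D nu f) I.
Proof.
  intros Hnu Hf [Ip [In [HIp [HIn ->]]]].
  assert (HIn0 : In = 0).
  { apply (sup_simple_zero D nu); auto.
    apply (is_lub_simple_below_ext D nu (fun x => Rmax (- f x) 0)); auto.
    intros x Dx. apply Rmax_right. specialize (Hf x Dx). lra. }
  rewrite HIn0, Rminus_0_r.
  apply (is_lub_simple_below_ext D nu (fun x => Rmax (f x) 0)); auto.
  intros x Dx. apply Rmax_left. auto.
Qed.

Lemma integral_opp (D : pset) (nu : pset -> R) (f : pt -> R) (I : R) :
  is_integral D nu f I -> is_integral D nu (fun x => - f x) (- I).
Proof.
  intros [Ip [In [HIp [HIn ->]]]]. exists In, Ip. split; [exact HIn | split; [|ring]].
  apply (is_lub_simple_below_ext D nu (fun x => Rmax (f x) 0)); auto.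
  intros x _. rewrite Ropp_involutive; auto.
Qed.

Lemma simple_below_extend (D : pset) (nu : pset -> R) (psi : pt -> R) (n : nat)
  (A : nat -> pset) (d : nat -> R) (c0 : R) :
  borel_prob_on D nu -> Borel D -> 0 <= c0 -> (forall x, D x -> c0 <= psi x) ->
  (forall i, (i < n)%nat -> Borel (A i) /\ 0 <= d i /\ forall x, A i x -> D x /\ d i <= psi x) ->
  (forall i j x, (i < n)%nat -> (j < n)%nat -> i <> j -> A i x -> A j x -> False) ->
  simple_below D nu psi (rsum n (fun i => d i * nu (A i)) + c0 * nu (remainder D n A)).
Proof.
  intros Hnu HD Hc0 Hpsi Hd Hdis.
  exists (S n), (fun i => if Nat.ltb i n then A i else remainder D n A),
    (fun i => if Nat.ltb i n then d i else c0).
  split; [|split].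
  - intros i Hi. destruct (Nat.ltb_spec i n) as [Hin|Hin]; [apply Hd; auto|].
    split; [apply Borel_remainder; [auto | intros; apply Hd; auto]|].
    split; [auto|]. intros x [Dx _]; auto.
  - intros i j x Hi Hj Hij.
    destruct (Nat.ltb_spec i n), (Nat.ltb_spec j n).
    + eapply Hdis; eauto.
    + intros Ai [_ Hno]; apply Hno; eauto.
    + intros [_ Hno] Aj; apply Hno; eauto.
    + lia.
  - simpl. rewrite Nat.ltb_irrefl. f_equal. apply rsum_ext; intros i Hi.
    destruct (Nat.ltb_spec i n); [reflexivity | lia].
Qed.

(* Each step c_i of a simple function below phi is replaced by the step
   max((c_i - beta)/alpha, c0) below psi, and the rest of D gets c0. *)
Lemma sup_affine_transfer (D : pset) (nu : pset -> R) (phi psi : pt -> R)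
  (alpha beta c0 J : R) :
  borel_prob_on D nu -> Borel D -> 0 < alpha -> 0 <= c0 -> 0 <= alpha * c0 + beta ->
  (forall x, D x -> c0 <= psi x) -> (forall x, D x -> phi x <= alpha * psi x + beta) ->
  is_lub (simple_below D nu psi) J ->
  is_upper_bound (simple_below D nu phi) (alpha * J + beta).
Proof.
  intros Hnu HD Ha Hc0 Hac Hpsi Hphi [HJ _] v [n [A [c [Hc [Hdis ->]]]]].
  set (d := fun i => Rmax ((c i - beta) / alpha) c0).
  assert (Hd : forall i, (i < n)%nat ->
            Borel (A i) /\ 0 <= d i /\ forall x, A i x -> D x /\ d i <= psi x).
  { intros i Hi. destruct (Hc i Hi) as [HB [_ HA]]. split; [auto | split].
    - apply Rle_trans with c0; [auto | apply Rmax_r].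
    - intros x Ax. destruct (HA x Ax) as [Dx Hle]. split; [auto|].
      apply Rmax_lub; [|auto]. apply div_le_of_le_mul; [auto|].
      specialize (Hphi x Dx). lra. }
  assert (Hstep : forall i, c i <= alpha * d i + beta).
  { intro i. assert (H := Rmax_l ((c i - beta) / alpha) c0). fold (d i) in H.
    assert (E : c i - beta = alpha * ((c i - beta) / alpha)) by (field; lra).
    nra. }
  assert (Hpart : rsum n (fun i => nu (A i)) + nu (remainder D n A) = 1).
  { apply nu_partition; auto. intros i Hi. destruct (Hd i Hi) as [HB [_ HA]].
    split; [auto | intros x Ax; apply HA; auto]. }
  assert (Hext := HJ _ (simple_below_extend D nu psi n A d c0 Hnu HD Hc0 Hpsi Hd Hdis)).
  assert (HR : 0 <= nu (remainder D n A)).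
  { apply Hnu, Borel_remainder; [auto | intros i Hi; apply Hd; auto]. }
  assert (Hsum : rsum n (fun i => c i * nu (A i))
                 <= alpha * rsum n (fun i => d i * nu (A i)) + beta * rsum n (fun i => nu (A i))).
  { rewrite <- !rsum_scal, <- rsum_plus. apply rsum_le; intros i Hi.
    assert (0 <= nu (A i)) by (apply Hnu, Hd; auto).
    specialize (Hstep i). nra. }
  nra.
Qed.

(** Two-point probability measures *)

(* Indicator of A evaluated at x, i.e. the Dirac mass at x evaluated on A. *)
Definition ind (A : pset) (x : pt) : R :=
  if excluded_middle_informative (A x) then 1 else 0.

Lemma ind_true (A : pset) (x : pt) : A x -> ind A x = 1.
Proof. intro H; unfold ind; destruct excluded_middle_informative; tauto. Qed.

Lemma ind_false (A : pset) (x : pt) : ~ A x -> ind A x = 0.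
Proof. intro H; unfold ind; destruct excluded_middle_informative; tauto. Qed.

Lemma ind_nonneg (A : pset) (x : pt) : 0 <= ind A x.
Proof. unfold ind; destruct excluded_middle_informative; lra. Qed.

Definition two_point (p : R) (x1 x2 : pt) : pset -> R :=
  fun A => p * ind A x1 + (1 - p) * ind A x2.

Lemma ind_partial_sums (A : nat -> pset) (x : pt) : disjoint_family A ->
  exists N, forall n, (n >= N)%nat ->
    sum_f_R0 (fun k => ind (A k) x) n = ind (fun y => exists k, A k y) x.
Proof.
  intros Hd. destruct (classic (exists k, A k x)) as [[k0 Hk0]|Hno].
  - exists k0. intros n Hn.
    rewrite (sum_f_R0_single _ k0)
      by (auto; intros k Hk; apply ind_false; intro H; exact (Hd k k0 x Hk H Hk0)).
    rewrite !ind_true by eauto. reflexivity.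
  - exists O. intros n _.
    rewrite ind_false by auto. apply sum_eq_R0. intros k _.
    apply ind_false. intro H; apply Hno; eauto.
Qed.

Lemma sum_f_R0_lin (p q : R) (f g : nat -> R) (n : nat) :
  sum_f_R0 (fun k => p * f k + q * g k) n = p * sum_f_R0 f n + q * sum_f_R0 g n.
Proof. induction n as [|n IH]; simpl; [ring|]. rewrite IH; ring. Qed.

Lemma two_point_prob (D : pset) (p : R) (x1 x2 : pt) :
  0 <= p <= 1 -> D x1 -> D x2 -> borel_prob_on D (two_point p x1 x2).
Proof.
  intros Hp H1 H2. unfold two_point. split; [|split].
  - intros A _. pose proof (ind_nonneg A x1). pose proof (ind_nonneg A x2). nra.
  - rewrite !ind_true by auto. ring.
  - intros A _ Hd.
    destruct (ind_partial_sums A x1 Hd) as [N1 HN1].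
    destruct (ind_partial_sums A x2 Hd) as [N2 HN2].
    apply (infinite_sum_eventually _ _ (max N1 N2)). intros n Hn.
    rewrite (sum_f_R0_lin p (1 - p) (fun k => ind (A k) x1) (fun k => ind (A k) x2)).
    rewrite HN1, HN2 by lia. reflexivity.
Qed.

Lemma rsum_ind_le (n : nat) (A : nat -> pset) (c : nat -> R) (g : pt -> R) (x : pt) :
  (forall i j, (i < n)%nat -> (j < n)%nat -> i <> j -> A i x -> A j x -> False) ->
  (forall i, (i < n)%nat -> A i x -> c i <= g x) -> 0 <= g x ->
  rsum n (fun i => c i * ind (A i) x) <= g x.
Proof.
  intros Hd Hc Hg.
  assert (Hval : forall m, (m <= n)%nat ->
    rsum m (fun i => c i * ind (A i) x) = 0 \/
    exists i, (i < m)%nat /\ A i x /\ rsum m (fun i => c i * ind (A i) x) = c i).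
  { induction m as [|m IH]; intros Hm; simpl; [left; reflexivity|].
    destruct (IH ltac:(lia)) as [H0|[i [Hi [Ai Hi']]]].
    - destruct (classic (A m x)) as [Am|Am].
      + right. exists m. split; [lia|]. split; [auto|]. rewrite H0, ind_true; auto; ring.
      + left. rewrite H0, ind_false; auto; ring.
    - right. exists i. split; [lia|]. split; [auto|]. rewrite Hi', ind_false; [ring|].
      intro Am. apply (Hd i m); auto; lia. }
  destruct (Hval n (le_n n)) as [->|[i [Hi [Ai ->]]]]; auto.
Qed.

Lemma two_point_simple_sup (D : pset) (p : R) (x1 x2 : pt) (g : pt -> R) :
  0 <= p <= 1 -> D x1 -> D x2 -> x1 <> x2 -> 0 <= g x1 -> 0 <= g x2 ->
  is_lub (simple_below D (two_point p x1 x2) g) (p * g x1 + (1 - p) * g x2).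
Proof.
  intros Hp H1 H2 H12 Hg1 Hg2. split.
  - intros v [n [A [c [Hc [Hdis ->]]]]]. unfold two_point.
    rewrite (rsum_ext n _ (fun i => p * (c i * ind (A i) x1) + (1 - p) * (c i * ind (A i) x2)))
      by (intros; ring).
    rewrite rsum_plus, !rsum_scal.
    assert (Hle : forall x, 0 <= g x -> rsum n (fun i => c i * ind (A i) x) <= g x).
    { intros x Hx. apply rsum_ind_le; auto.
      - intros i j; apply Hdis.
      - intros i Hi Ai. apply (proj2 (proj2 (Hc i Hi)) x Ai). }
    pose proof (Hle x1 Hg1). pose proof (Hle x2 Hg2). nra.
  - intros bnd Hb. apply Hb.
    exists 2%nat, (fun i => match i with O => fun y => y = x1 | _ => fun y => y = x2 end),
      (fun i => match i with O => g x1 | _ => g x2 end).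
    split; [|split].
    + intros [|[|i]] Hi; try lia; (split; [apply Borel_point | split; [auto|]]);
        intros y ->; split; auto; lra.
    + intros [|[|i]] [|[|j]] x Hi Hj Hij; try lia; intros -> E; auto.
    + simpl. unfold two_point.
      rewrite (ind_true (fun y => y = x1) x1), (ind_true (fun y => y = x2) x2),
        (ind_false (fun y => y = x1) x2), (ind_false (fun y => y = x2) x1) by auto.
      ring.
Qed.

Lemma two_point_integral (D : pset) (p : R) (x1 x2 : pt) (f : pt -> R) :
  0 <= p <= 1 -> D x1 -> D x2 -> x1 <> x2 ->
  is_integral D (two_point p x1 x2) f (p * f x1 + (1 - p) * f x2).
Proof.
  intros Hp H1 H2 H12.
  exists (p * Rmax (f x1) 0 + (1 - p) * Rmax (f x2) 0),
    (p * Rmax (- f x1) 0 + (1 - p) * Rmax (- f x2) 0).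
  split; [|split].
  - apply (two_point_simple_sup D p x1 x2 (fun x => Rmax (f x) 0)); auto; apply Rmax_r.
  - apply (two_point_simple_sup D p x1 x2 (fun x => Rmax (- f x) 0)); auto; apply Rmax_r.
  - pose proof (Rmax_split (f x1)). pose proof (Rmax_split (f x2)). nra.
Qed.

(** The rectangle D: lower bound and optimal measures *)

(* The optimal value divided by h0^2, in the two regimes of the theorem. *)
Definition Vcoef (mum mup sp : R) : R :=
  if Rle_dec (mup * mum - 2 * sp ^ 2) (mum ^ 2)
  then mum ^ 2 / (mum ^ 2 + sp ^ 2)
  else (mup * mum - sp ^ 2) / ((mup + mum) / 2) ^ 2.

Definition pi_star (h0 mum mup sp : R) : R :=
  if Rle_dec (mup * mum - 2 * sp ^ 2) (mum ^ 2)
  then h0 * mum / (mum ^ 2 + sp ^ 2)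
  else h0 / ((mup + mum) / 2).

Section Rectangle.
Variables mum mup sm sp : R.
Hypotheses (Hmum : 0 < mum) (Hmu : mum < mup) (Hsm : 0 < sm) (Hs : sm < sp).
(* D is the rectangle; a and b are the coefficients of the chord of
   mu |-> mu^2 + sigma_+^2 through mu_- and mu_+. *)
Let D := Dset mum mup sm sp.
Let a := mup + mum.
Let b := mup * mum - sp ^ 2.

(* The chord inequality: mu^2 + sigma^2 <= a mu - b on D, since
   (mu - mu_-)(mu - mu_+) <= 0 and sigma <= sigma_+. *)
Lemma chord_bound (x : pt) : D x -> fst x ^ 2 + snd x ^ 2 <= a * fst x - b.
Proof. intros [[H1 H2] [H3 H4]]. unfold a, b. nra. Qed.

Lemma chord_corner (mu : R) : (mu = mum \/ mu = mup) -> mu ^ 2 + sp ^ 2 = a * mu - b.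
Proof. unfold a, b. intros [-> | ->]; ring. Qed.

Lemma second_moment_lower (nu : pset -> R) (I2 : R) : borel_prob_on D nu ->
  is_integral D nu (fun p => fst p ^ 2 + snd p ^ 2) I2 -> mum ^ 2 <= I2.
Proof.
  intros Hnu HI2.
  apply (sup_simple_ge_const D nu (fun p => fst p ^ 2 + snd p ^ 2)); auto.
  - apply Borel_rect.
  - nra.
  - intros x [[? ?] [? ?]]. nra.
  - apply integral_nonneg_sup; auto. intros x _. nra.
Qed.

(* Integrating the chord inequality: with J the integral of k mu (k > 0),
   the first moment m = J / k satisfies m >= mu_- and I2 <= a m - b. *)
Lemma moment_bounds (nu : pset -> R) (k J I2 : R) : borel_prob_on D nu -> 0 < k ->
  is_lub (simple_below D nu (fun p => k * fst p)) J ->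
  is_integral D nu (fun p => fst p ^ 2 + snd p ^ 2) I2 ->
  mum <= J / k /\ I2 <= a * (J / k) - b.
Proof.
  intros Hnu Hk HJ HI2.
  assert (HD : Borel D) by apply Borel_rect.
  split.
  - apply le_div_of_mul_le; [auto|]. rewrite Rmult_comm.
    apply (sup_simple_ge_const D nu (fun p => k * fst p)); auto; [nra|].
    intros x [[? ?] _]. nra.
  - replace (a * (J / k) - b) with (a / k * J + - b) by (field; lra).
    assert (H2 : is_lub (simple_below D nu (fun p => fst p ^ 2 + snd p ^ 2)) I2)
      by (apply integral_nonneg_sup; auto; intros; nra).
    apply (proj2 H2).
    apply (sup_affine_transfer D nu _ (fun p => k * fst p) (a / k) (- b) (k * mum)); auto.
    + apply Rdiv_lt_0_compat; unfold a; lra.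
    + nra.
    + replace (a / k * (k * mum) + - b) with (mum ^ 2 + sp ^ 2) by (unfold a, b; field; lra).
      nra.
    + intros x [[? ?] _]. nra.
    + intros x Dx. replace (a / k * (k * fst x) + - b) with (a * fst x - b) by (field; lra).
      apply chord_bound; auto.
Qed.

Lemma first_moment_sup (nu : pset -> R) (h0 I1 : R) : borel_prob_on D nu ->
  is_integral D nu (fun p => h0 * fst p) I1 ->
  exists J, is_lub (simple_below D nu (fun p => Rabs h0 * fst p)) J /\ I1 ^ 2 = J ^ 2.
Proof.
  intros Hnu HI1. destruct (Rle_or_lt 0 h0) as [Hpos|Hneg].
  - exists I1. split; [|ring]. rewrite Rabs_right by lra.
    apply integral_nonneg_sup; auto. intros x [[? ?] _]. nra.
  - exists (- I1). split; [|ring]. rewrite Rabs_left by lra.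
    apply (is_lub_simple_below_ext D nu (fun p => - (h0 * fst p))); [intros; ring|].
    apply integral_nonneg_sup; [auto | intros x [[? ?] _]; nra | apply integral_opp; auto].
Qed.

(* In the second regime mu_+ mu_- - sigma_+^2 > mu_-^2 + sigma_+^2 > 0. *)
Lemma Vcoef_nonneg : 0 <= Vcoef mum mup sp.
Proof.
  unfold Vcoef; destruct Rle_dec as [Hc|Hc].
  - apply Rmult_le_pos; [nra | left; apply Rinv_0_lt_compat; nra].
  - apply Rmult_le_pos; [nra | left; apply Rinv_0_lt_compat; nra].
Qed.

(* The scalar heart of the lower bound: for every first moment m >= mu_-,
   Vcoef * (a m - b) <= m^2.  In the first regime the ratio m^2 / (a m - b)
   is increasing on [mu_-, oo); in the second its minimum is at m = 2b/a. *)
Lemma Vcoef_le_ratio (m : R) : mum <= m -> Vcoef mum mup sp * (a * m - b) <= m ^ 2.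
Proof.
  intros Hm. unfold Vcoef; destruct Rle_dec as [Hc|Hc].
  - rewrite Rmult_comm, Rmult_div_assoc. apply div_le_of_le_mul; [nra|].
    assert (E : m ^ 2 * (mum ^ 2 + sp ^ 2) - (a * m - b) * mum ^ 2
                = (m - mum) * ((mum ^ 2 + sp ^ 2) * (m - mum) + mum * (mum ^ 2 + 2 * sp ^ 2 - mup * mum)))
      by (unfold a, b; ring).
    assert (0 <= (m - mum) * ((mum ^ 2 + sp ^ 2) * (m - mum) + mum * (mum ^ 2 + 2 * sp ^ 2 - mup * mum))).
    { apply Rmult_le_pos; [lra|]. apply Rplus_le_le_0_compat; apply Rmult_le_pos; nra. }
    lra.
  - rewrite Rmult_comm, Rmult_div_assoc. apply div_le_of_le_mul; [nra|].
    assert (E : m ^ 2 * ((mup + mum) / 2) ^ 2 - (a * m - b) * (mup * mum - sp ^ 2)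
                = ((a * m - 2 * b) / 2) ^ 2) by (unfold a, b; field).
    assert (0 <= ((a * m - 2 * b) / 2) ^ 2) by apply pow2_ge_0.
    lra.
Qed.

Lemma value_lower_bound (nu : pset -> R) (h0 I1 I2 : R) : borel_prob_on D nu ->
  is_integral D nu (fun p => h0 * fst p) I1 ->
  is_integral D nu (fun p => fst p ^ 2 + snd p ^ 2) I2 ->
  Vcoef mum mup sp * h0 ^ 2 <= I1 ^ 2 / I2.
Proof.
  intros Hnu HI1 HI2.
  assert (HI2pos : mum ^ 2 <= I2) by (eapply second_moment_lower; eauto).
  apply le_div_of_mul_le; [nra|].
  destruct (Req_dec h0 0) as [->|Hh].
  - replace (Vcoef mum mup sp * 0 ^ 2 * I2) with 0 by ring. nra.
  - destruct (first_moment_sup nu h0 I1 Hnu HI1) as [J [HJ ->]].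
    assert (Hk : 0 < Rabs h0) by (apply Rabs_pos_lt; auto).
    destruct (moment_bounds nu (Rabs h0) J I2 Hnu Hk HJ HI2) as [Hm Hup].
    assert (Hratio := Vcoef_le_ratio (J / Rabs h0) Hm).
    assert (HV := Vcoef_nonneg).
    assert (EJ : J ^ 2 = h0 ^ 2 * (J / Rabs h0) ^ 2).
    { rewrite <- (pow2_abs h0). field. lra. }
    rewrite EJ. set (m := J / Rabs h0) in *.
    assert (Vcoef mum mup sp * I2 <= m ^ 2).
    { apply Rle_trans with (Vcoef mum mup sp * (a * m - b)); [|auto].
      apply Rmult_le_compat_l; auto. }
    assert (0 <= h0 ^ 2) by apply pow2_ge_0. nra.
Qed.

Lemma corner_measure (h0 p : R) : 0 <= p <= 1 ->
  let m := p * mum + (1 - p) * mup in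
  borel_prob_on D (two_point p (mum, sp) (mup, sp)) /\
  is_integral D (two_point p (mum, sp) (mup, sp)) (fun q => h0 * fst q) (h0 * m) /\
  is_integral D (two_point p (mum, sp) (mup, sp)) (fun q => fst q ^ 2 + snd q ^ 2) (a * m - b).
Proof.
  intros Hp m.
  assert (D1 : D (mum, sp)) by (unfold D, Dset; simpl; lra).
  assert (D2 : D (mup, sp)) by (unfold D, Dset; simpl; lra).
  assert (H12 : (mum, sp) <> (mup, sp)) by (intro E; injection E; lra).
  split; [apply two_point_prob; auto|]. split.
  - replace (h0 * m) with (p * (h0 * mum) + (1 - p) * (h0 * mup)) by (unfold m; ring).
    exact (two_point_integral D p (mum, sp) (mup, sp) (fun q => h0 * fst q) Hp D1 D2 H12).
  - replace (a * m - b) with (p * (mum ^ 2 + sp ^ 2) + (1 - p) * (mup ^ 2 + sp ^ 2))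
      by (rewrite !chord_corner by auto; unfold m; ring).
    exact (two_point_integral D p (mum, sp) (mup, sp) (fun q => fst q ^ 2 + snd q ^ 2) Hp D1 D2 H12).
Qed.

(* In the second regime the optimal first moment 2b/a lies in [mu_-, mu_+];
   this is the weight of (mu_-, sigma_+) realising it. *)
Let lam := (mup - 2 * b / a) / (mup - mum).

Lemma lam_spec : ~ (mup * mum - 2 * sp ^ 2 <= mum ^ 2) ->
  0 <= lam <= 1 /\ lam * mum + (1 - lam) * mup = 2 * b / a.
Proof.
  intros Hc. assert (Ha : 0 < a) by (unfold a; lra).
  assert (HM1 : mum <= 2 * b / a).
  { apply le_div_of_mul_le; [auto|]. unfold a, b; nra. }
  assert (HM2 : 2 * b / a <= mup).
  { apply div_le_of_le_mul; [auto|]. unfold a, b; nra. }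
  split; [split|].
  - apply Rmult_le_pos; [lra | left; apply Rinv_0_lt_compat; lra].
  - apply div_le_of_le_mul; lra.
  - unfold lam. field. lra.
Qed.

Lemma value_attained (h0 : R) : exists nu I1 I2,
  borel_prob_on D nu /\
  is_integral D nu (fun p => h0 * fst p) I1 /\
  is_integral D nu (fun p => fst p ^ 2 + snd p ^ 2) I2 /\
  I1 ^ 2 / I2 = Vcoef mum mup sp * h0 ^ 2.
Proof.
  unfold Vcoef; destruct Rle_dec as [Hc|Hc].
  - destruct (corner_measure h0 1 ltac:(lra)) as [Hnu [H1 H2]].
    do 3 eexists; split; [exact Hnu | split; [exact H1 | split; [exact H2|]]].
    rewrite <- (chord_corner (1 * mum + (1 - 1) * mup)) by (left; ring).
    field. nra.
  - destruct (lam_spec Hc) as [Hl Hm].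
    destruct (corner_measure h0 lam Hl) as [Hnu [H1 H2]].
    do 3 eexists; split; [exact Hnu | split; [exact H1 | split; [exact H2|]]].
    rewrite Hm. unfold a, b. field. split; [lra | nra].
Qed.

(* If the mu-part of F is no larger at mu_+ than at mu_-, then by convexity
   in mu and monotonicity in sigma the maximum of F(ps, ., .) over D is
   attained at the corner (mu_-, sigma_+). *)
Lemma max_at_corner (h0 ps : R) : (h0 - ps * mup) ^ 2 <= (h0 - ps * mum) ^ 2 ->
  forall x, D x -> F h0 0 ps (fst x) (snd x) <= F h0 0 ps mum sp.
Proof.
  intros H [mu s] [[H1 H2] [H3 H4]]. simpl in *. unfold F.
  set (t := (mup - mu) / (mup - mum)).
  assert (Ht : 0 <= t <= 1).
  { split; [apply Rmult_le_pos; [lra | left; apply Rinv_0_lt_compat; lra]|].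
    apply div_le_of_le_mul; lra. }
  replace (h0 - ps * mu) with (t * (h0 - ps * mum) + (1 - t) * (h0 - ps * mup))
    by (unfold t; field; lra).
  pose proof (square_convex_le (h0 - ps * mum) (h0 - ps * mup) t Ht H).
  assert ((0 - ps * s) ^ 2 <= (0 - ps * sp) ^ 2).
  { replace ((0 - ps * s) ^ 2) with (ps ^ 2 * s ^ 2) by ring.
    replace ((0 - ps * sp) ^ 2) with (ps ^ 2 * sp ^ 2) by ring.
    apply Rmult_le_compat_l; [apply pow2_ge_0 | nra]. }
  lra.
Qed.

(* pi* balances the two corners: in the second regime exactly. *)
Lemma pi_star_balanced (h0 : R) :
  (h0 - pi_star h0 mum mup sp * mup) ^ 2 <= (h0 - pi_star h0 mum mup sp * mum) ^ 2.
Proof.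
  unfold pi_star; destruct Rle_dec as [Hc|Hc].
  - assert (Hs0 : 0 < mum ^ 2 + sp ^ 2) by nra.
    replace (h0 - h0 * mum / (mum ^ 2 + sp ^ 2) * mup)
      with (h0 / (mum ^ 2 + sp ^ 2) * (mum ^ 2 + sp ^ 2 - mum * mup)) by (field; lra).
    replace (h0 - h0 * mum / (mum ^ 2 + sp ^ 2) * mum)
      with (h0 / (mum ^ 2 + sp ^ 2) * sp ^ 2) by (field; lra).
    rewrite !Rpow_mult_distr. apply Rmult_le_compat_l; [apply pow2_ge_0|].
    assert (- sp ^ 2 <= mum ^ 2 + sp ^ 2 - mum * mup <= sp ^ 2) by (split; nra).
    nra.
  - right. field. lra.
Qed.

(* Any pi <> pi* does strictly worse than pi* on the corners: in the first
   regime already at (mu_-, sigma_+); in the second regime on the lam-average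
   of the two corners, which equals the value at pi* plus b (pi - pi_star)^2. *)
Lemma pi_star_strict (h0 pi m' : R) :
  F h0 0 pi mum sp <= m' -> F h0 0 pi mup sp <= m' -> pi <> pi_star h0 mum mup sp ->
  F h0 0 (pi_star h0 mum mup sp) mum sp < m'.
Proof.
  intros M1 M2 Hne.
  assert (Hd : 0 < (pi - pi_star h0 mum mup sp) ^ 2).
  { rewrite <- Rsqr_pow2. apply Rsqr_pos_lt. lra. }
  unfold pi_star in *; destruct Rle_dec as [Hc|Hc].
  - assert (E : F h0 0 pi mum sp - F h0 0 (h0 * mum / (mum ^ 2 + sp ^ 2)) mum sp
                = (mum ^ 2 + sp ^ 2) * (pi - h0 * mum / (mum ^ 2 + sp ^ 2)) ^ 2)
      by (unfold F; field; nra).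
    assert (0 < (mum ^ 2 + sp ^ 2) * (pi - h0 * mum / (mum ^ 2 + sp ^ 2)) ^ 2)
      by (apply Rmult_lt_0_compat; nra).
    lra.
  - destruct (lam_spec Hc) as [Hl _].
    assert (Hb : 0 < b) by (unfold b; nra).
    assert (E : lam * F h0 0 pi mum sp + (1 - lam) * F h0 0 pi mup sp
                - F h0 0 (h0 / ((mup + mum) / 2)) mum sp
                = b * (pi - h0 / ((mup + mum) / 2)) ^ 2)
      by (unfold lam, F, a, b; field; lra).
    assert (0 < b * (pi - h0 / ((mup + mum) / 2)) ^ 2) by (apply Rmult_lt_0_compat; auto).
    nra.
Qed.

Lemma pi_star_minimax (h0 : R) :
  exists m, is_max_F D h0 0 (pi_star h0 mum mup sp) m /\
    forall pi m', is_max_F D h0 0 pi m' -> pi <> pi_star h0 mum mup sp -> m < m'.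
Proof.
  assert (D1 : D (mum, sp)) by (unfold D, Dset; simpl; lra).
  assert (D2 : D (mup, sp)) by (unfold D, Dset; simpl; lra).
  exists (F h0 0 (pi_star h0 mum mup sp) mum sp). split; [split|].
  - exists (mum, sp). split; auto.
  - apply (max_at_corner h0 (pi_star h0 mum mup sp)), pi_star_balanced.
  - intros pi m' [_ Hm] Hne.
    apply (pi_star_strict h0 pi); [apply (Hm _ D1) | apply (Hm _ D2) | auto].
Qed.

End Rectangle.

Theorem mainTheorem8 (mum mup sm sp h0 h1 : R)
  (Hmum : 0 < mum) (Hmu : mum < mup) (Hsm : 0 < sm) (Hs : sm < sp)
  (Hh1 : h1 = 0) :
  let D := Dset mum mup sm sp in
  let muM := (mup + mum) / 2 in
  let V := if Rle_dec (mup * mum - 2 * sp ^ 2) (mum ^ 2)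
           then h0 ^ 2 * mum ^ 2 / (mum ^ 2 + sp ^ 2)
           else (mup * mum - sp ^ 2) / muM ^ 2 * h0 ^ 2 in
  let pistar := if Rle_dec (mup * mum - 2 * sp ^ 2) (mum ^ 2)
           then h0 * mum / (mum ^ 2 + sp ^ 2)
           else h0 / muM in
  (* the minimum over Borel probability measures nu on D equals V *)
  ((forall nu I1 I2, borel_prob_on D nu ->
      is_integral D nu (fun p => h0 * fst p) I1 ->
      is_integral D nu (fun p => fst p ^ 2 + snd p ^ 2) I2 ->
      V <= I1 ^ 2 / I2) /\
   (exists nu I1 I2, borel_prob_on D nu /\
      is_integral D nu (fun p => h0 * fst p) I1 /\
      is_integral D nu (fun p => fst p ^ 2 + snd p ^ 2) I2 /\
      I1 ^ 2 / I2 = V)) /\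
  (* pistar is the unique minimizer of pi |-> max_D F(pi, ., .) *)
  (exists m, is_max_F D h0 h1 pistar m /\
     forall pi m', is_max_F D h0 h1 pi m' -> pi <> pistar -> m < m').
Proof.
  intros D muM V pistar. subst h1.
  assert (HV : V = Vcoef mum mup sp * h0 ^ 2).
  { unfold V, muM, Vcoef. destruct Rle_dec; field; nra. }
  rewrite HV. split; [split|].
  - intros nu I1 I2. apply value_lower_bound; auto.
  - apply value_attained; auto.
  - exact (pi_star_minimax mum mup sm sp Hmum Hmu Hsm Hs h0).
Qed.
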